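(* Let $G$ be an l.c.s.c. group, $p\geq 1$, and let $B\hookrightarrow A\twoheadrightarrow A/B$ be an exact sequence of Polish Abelian groups ($B$ a closed subgroup of $A$). Then every almost type-I function $f:G^p\to A/B$ which is regular at the identity has a lift $\hat f:G^p\to A$ (i.e. $\hat f$ composed with the quotient map equals $f$) which is almost type-I and regular at the identity. If $G$ is an algebraic subgroup of some $\mathrm{GL}_n(\mathbb{R})$, the same holds with ''type-II'' in place of ''type-I''.
   Context: For $X=G^p$ with Haar measure $\mu$ and $A$ a Polish Abelian group: a map $f:X\to A$ is of type I if it is locally finite-valued and locally constant on some open set of full $\mu$-measure; almost type-I if it is a locally uniform limit (uniform on compact sets) of type-I functions. When $G\le \mathrm{GL}_n(\mathbb{R})$ is algebraic, $f$ is of type II if it is locally finite-valued with level sets agreeing locally with semi-algebraic subsets of $G^p\subseteq M_{n\times n}(\mathbb{R})^p$; almost type-II means a locally uniform limit of type-II functions. An almost type-I (resp. II) $f$ is regular at $x_0$ if it is a locally uniform limit of type-I (resp. II) functions each locally constant on a neighbourhood of $x_0$. *)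

From HB Require Import structures.
From mathcomp Require Import all_boot all_order all_algebra.
From mathcomp Require Import all_classical all_reals all_analysis.

Set Implicit Arguments.
Unset Strict Implicit.
Unset Printing Implicit Defensive.

Import Order.TTheory GRing.Theory Num.Theory.
Import numFieldTopology.Exports.
Local Open Scope classical_set_scope.
Local Open Scope ring_scope.

Definition topological_group (G : topologicalType) (mul : G -> G -> G)
    (inv : G -> G) (one : G) : Prop :=
  [/\ associative mul, left_id one mul /\ right_id one mul,
      left_inverse one inv mul /\ right_inverse one inv mul,
      continuous (fun xy : G * G => mul xy.1 xy.2) & continuous inv].

Definition lcsc_group (G : topologicalType) (mul : G -> G -> G)
    (inv : G -> G) (one : G) : Prop :=
  [/\ topological_group mul inv one, hausdorff_space G,
      locally_compact [set: G] & @second_countable G].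

Definition gpow (G : topologicalType) (p : nat) := {ptws 'I_p -> G}.

Definition pmul (G : topologicalType) (p : nat) (mul : G -> G -> G)
  (x y : gpow G p) : gpow G p := fun i => mul (x i) (y i).

Definition pone (G : topologicalType) (p : nat) (one : G) : gpow G p :=
  fun _ => one.

Definition borel (X : topologicalType) : set (set X) := <<s open >>.

Definition haar_measure (R : realType) (X : topologicalType)
    (mul : X -> X -> X) (mu : set X -> \bar R) : Prop :=
  [/\ mu set0 = 0%E /\ (forall E, borel E -> (0 <= mu E)%E),
      (forall F : nat -> set X, (forall k, borel (F k)) -> trivIset setT F ->
          (fun k => \sum_(0 <= i < k) mu (F i))%E @ \oo --> mu (\bigcup_k F k)),
      (forall g E, borel E -> mu (mul g @` E) = mu E),
      (forall K, compact K -> (mu K < +oo)%E)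
    & (forall U, open U -> U !=set0 -> (0 < mu U)%E)].

Definition compatible_metric (R : realType) (T : topologicalType)
    (d : T -> T -> R) : Prop :=
  [/\ (forall x y, 0 <= d x y), (forall x y, d x y = 0 <-> x = y),
      (forall x y, d x y = d y x),
      (forall x y z, d x z <= d x y + d y z)
    & (forall (x : T) (U : set T),
          nbhs x U <-> exists2 e : R, 0 < e & [set y | d x y < e] `<=` U)].

Definition complete_metric (R : realType) (T : Type) (d : T -> T -> R) : Prop :=
  forall u : nat -> T,
    (forall e : R, 0 < e -> exists N, forall m k, (N <= m)%N -> (N <= k)%N ->
        d (u m) (u k) < e) ->
    exists l, forall e : R, 0 < e -> exists N, forall k, (N <= k)%N -> d (u k) l < e.

Definition polish (R : realType) (T : topologicalType) : Prop :=
  (exists D : set T, countable D /\ dense D) /\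
  (exists d : T -> T -> R, compatible_metric d /\ complete_metric d).

(* q : A -> C realizes C as the quotient topological group A / ker q *)
Definition quotient_map (A C : topologicalZmodType) (q : A -> C) : Prop :=
  [/\ (forall x y, q (x - y) = q x - q y), continuous q,
      (forall c, exists a, q a = c)
    & (forall U : set A, open U -> open (q @` U))].

Section Types.
Variables (X : topologicalType) (A : topologicalZmodType).

Definition locally_finite_valued (f : X -> A) : Prop :=
  forall x : X, exists2 U, nbhs x U & finite_set (f @` U).

Definition locally_constant_on (U : set X) (f : X -> A) : Prop :=
  forall x, U x -> \forall y \near x, f y = f x.

Definition locally_uniform_limit (fs : nat -> X -> A) (f : X -> A) : Prop :=
  forall K : set X, compact K -> forall V : set A, nbhs (0 : A) V ->
    \forall k \near \oo, forall x, K x -> V (fs k x - f x).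

Definition typeI (R : realType) (mu : set X -> \bar R) (f : X -> A) : Prop :=
  locally_finite_valued f /\
  exists U : set X, [/\ open U, mu (~` U) = 0%E & locally_constant_on U f].

Definition almost_regular (P : (X -> A) -> Prop) (f : X -> A) (x0 : X) : Prop :=
  exists fs : nat -> X -> A,
    (forall k, P (fs k) /\ exists2 V, nbhs x0 V & locally_constant_on V (fs k))
    /\ locally_uniform_limit fs f.

End Types.

Inductive polyfun (R : pzRingType) (I : Type) : ((I -> R) -> R) -> Prop :=
  | polyfun_const (c : R) : polyfun (fun _ => c)
  | polyfun_coord (i : I) : polyfun (fun x => x i)
  | polyfun_add P Q : polyfun P -> polyfun Q -> polyfun (fun x => P x + Q x)
  | polyfun_mul P Q : polyfun P -> polyfun Q -> polyfun (fun x => P x * Q x).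

Inductive semialgebraic (R : realType) (I : Type) : set (I -> R) -> Prop :=
  | semialg_basic P : polyfun P -> semialgebraic [set x | 0 < P x]
  | semialg_compl S : semialgebraic S -> semialgebraic (~` S)
  | semialg_union S T : semialgebraic S -> semialgebraic T ->
      semialgebraic (S `|` T).

(* iota : G -> M_n(R) is an isomorphism of topological groups onto an
   algebraic subgroup of GL_n(R) *)
Definition algebraic_embedding (R : realType) (G : topologicalType)
    (mul : G -> G -> G) (n : nat) (iota : G -> 'M[R]_n) : Prop :=
  [/\ injective iota,
      (forall g h, iota (mul g h) = iota g *m iota h),
      continuous iota,
      (forall U : set G, open U ->
          exists2 W : set 'M[R]_n, open W & iota @` U = range iota `&` W)
    & exists Ps : set ((('I_n * 'I_n) -> R) -> R),
        Ps `<=` @polyfun R ('I_n * 'I_n) /\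
        range iota = [set M : 'M[R]_n | M \in unitmx /\
                        forall P, Ps P -> P (fun ij => M ij.1 ij.2) = 0]].

Definition gcoords (R : realType) (G : topologicalType) (p n : nat)
    (iota : G -> 'M[R]_n) (x : gpow G p) : ('I_p * 'I_n * 'I_n) -> R :=
  fun t => iota (x t.1.1) t.1.2 t.2.

Definition typeII (R : realType) (G : topologicalType) (p n : nat)
    (iota : G -> 'M[R]_n) (A : topologicalZmodType) (f : gpow G p -> A) : Prop :=
  locally_finite_valued f /\
  forall (a : A) (x : gpow G p), exists2 V, nbhs x V &
    exists2 S : set ('I_p * 'I_n * 'I_n -> R), semialgebraic S &
      V `&` f @^-1` [set a] = V `&` [set y | S (gcoords iota y)].

From HB Require Import structures.
From mathcomp Require Import all_boot all_order all_algebra.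
From mathcomp Require Import all_classical all_reals all_analysis.
From mathcomp Require Import lra.
Import Order.TTheory GRing.Theory Num.Theory.
Import numFieldTopology.Exports.
Local Open Scope classical_set_scope.
Local Open Scope ring_scope.

(* Let g_k -> f locally uniformly, with each g_k of type I (or II) and locally
   constant near the identity.  Choose neighbourhoods W_k of 0 in A with
   W_{k+1} + W_{k+1} <= W_k, pass to a subsequence along which g_k - f is so
   small on the k-th compact set of an exhaustion of G^p that differences of
   consecutive terms lift into W_{k+1} (q is open), and lift telescopically:
   h_{k+1} = h_k + s_k (g_{k+1} - g_k) with sections s_k of q choosing small
   lifts.  Each h_k arises from finitely many g_j by pointwise operations, which
   preserve type I/II and local constancy near the identity.  The h_k are
   Cauchy for the group uniformity of A, which is complete since A is Polish,
   and their limit lifts f and is approached locally uniformly. *)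

Set Implicit Arguments.
Unset Strict Implicit.
Unset Printing Implicit Defensive.

Section PointwiseClasses.
Variable X : topologicalType.

(* Type-I and type-II conditions make sense for functions into any type; the
   lift combines [A]- and [C]-valued functions pointwise, so they are stated
   for arbitrary codomains.  On a topologicalZmodType they unfold to [typeI]
   and [typeII]. *)
Definition fun_class := forall T : choiceType, (X -> T) -> Prop.

Definition pointwise_closed (P : fun_class) : Prop :=
  (forall (T1 T2 : choiceType) (F : T1 -> T2) (u : X -> T1),
      P T1 u -> P T2 (F \o u)) /\
  (forall (T1 T2 : choiceType) (u : X -> T1) (v : X -> T2),
      P T1 u -> P T2 v -> P (T1 * T2)%type (fun x => (u x, v x))).

Definition class_meet (P Q : fun_class) : fun_class :=
  fun T f => P T f /\ Q T f.

Lemma pointwise_closed_meet (P Q : fun_class) :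
  pointwise_closed P -> pointwise_closed Q -> pointwise_closed (class_meet P Q).
Proof.
move=> [Pcomp Ppair] [Qcomp Qpair]; split.
  by move=> T1 T2 F u [Pu Qu]; split; [exact: Pcomp|exact: Qcomp].
by move=> T1 T2 u v [Pu Qu] [Pv Qv]; split; [exact: Ppair|exact: Qpair].
Qed.

Lemma pointwise_closed_map2 (P : fun_class) : pointwise_closed P ->
  forall (T1 T2 T3 : choiceType) (F : T1 -> T2 -> T3) (u : X -> T1) (v : X -> T2),
  P T1 u -> P T2 v -> P T3 (fun x => F (u x) (v x)).
Proof.
move=> [Pcomp Ppair] T1 T2 T3 F u v Pu Pv.
exact: (Pcomp _ _ (fun t => F t.1 t.2) _ (Ppair _ _ _ _ Pu Pv)).
Qed.

Definition lfinite_valued (T : Type) (f : X -> T) : Prop :=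
  forall x : X, exists2 U, nbhs x U & finite_set (f @` U).

Definition lconstant_on (T : Type) (U : set X) (f : X -> T) : Prop :=
  forall x, U x -> \forall y \near x, f y = f x.

Definition constant_near (x0 : X) (T : Type) (f : X -> T) : Prop :=
  exists2 V, nbhs x0 V & lconstant_on V f.

Lemma lfinite_valued_closed : pointwise_closed lfinite_valued.
Proof.
split=> [T1 T2 F u fu x|T1 T2 u v fu fv x].
  by have [U xU finU] := fu x; exists U => //; rewrite -image_comp; exact: finite_image.
have [U xU finU] := fu x; have [V xV finV] := fv x.
exists (U `&` V); first exact: filterI.
apply: sub_finite_set (finite_setX finU finV).
by move=> _ [y [Uy Vy] <-]; split; exists y.
Qed.

Lemma lconstant_on_comp (T1 T2 : Type) (F : T1 -> T2) (U : set X) (u : X -> T1) :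
  lconstant_on U u -> lconstant_on U (F \o u).
Proof. by move=> cu x /cu; apply: filterS => y /= ->. Qed.

Lemma lconstant_on_pair (T1 T2 : Type) (U V : set X) (u : X -> T1) (v : X -> T2) :
  lconstant_on U u -> lconstant_on V v ->
  lconstant_on (U `&` V) (fun x => (u x, v x)).
Proof.
move=> cu cv x [/cu Ux /cv Vx].
by apply: filterS (filterI Ux Vx) => y [-> ->].
Qed.

Lemma constant_near_closed (x0 : X) : pointwise_closed (constant_near x0).
Proof.
split=> [T1 T2 F u [U x0U cu]|T1 T2 u v [U x0U cu] [V x0V cv]].
  by exists U => //; exact: lconstant_on_comp.
by exists (U `&` V); [exact: filterI|exact: lconstant_on_pair].
Qed.

End PointwiseClasses.

Section NullSets.
Variables (R : realType) (X : topologicalType) (mu : set X -> \bar R).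
Hypotheses (mu0 : mu set0 = 0%E) (mu_ge0 : forall E, borel E -> (0 <= mu E)%E)
  (mu_sigma_additive : forall F : nat -> set X, (forall k, borel (F k)) ->
     trivIset setT F ->
     (fun k => \sum_(0 <= i < k) mu (F i))%E @ \oo --> mu (\bigcup_k F k)).

Lemma borelC (E : set X) : borel E -> borel (~` E).
Proof. by rewrite -setTD; exact: sigma_algebraCD. Qed.

Lemma borelU (E F : set X) : borel E -> borel F -> borel (E `|` F).
Proof.
move=> bE bF; rewrite -bigcup2E; apply: sigma_algebra_bigcup => -[|[|k]] //=.
exact: sigma_algebra0.
Qed.

Lemma borelD (E F : set X) : borel E -> borel F -> borel (F `\` E).
Proof.
move=> bE bF; rewrite -[F `\` E]setCK setCD.
by apply: borelC; apply: borelU => //; exact: borelC.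
Qed.

Lemma measureU_disjoint (E F : set X) : borel E -> borel F -> E `&` F = set0 ->
  mu (E `|` F) = (mu E + mu F)%E.
Proof.
move=> bE bF EF0.
have bEF k : borel (bigcup2 E F k) by case: k => [|[|k]] //=; exact: sigma_algebra0.
have := mu_sigma_additive bEF; rewrite -trivIset_bigcup2 bigcup2E => /(_ EF0) sums.
apply: (cvg_unique (@ereal_hausdorff R) sums).
apply: cvg_near_cst; exists 2%N => // -[|[|k]] // _.
rewrite !big_nat_recl //= big1 => [|i _]; [by rewrite adde0 | exact: mu0].
Qed.

Lemma measure_le (E F : set X) : borel E -> borel F -> E `<=` F -> (mu E <= mu F)%E.
Proof.
move=> bE bF EF; have bFE := borelD bE bF.
rewrite -(setDUK EF) measureU_disjoint ?leeDl ?mu_ge0 //.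
by rewrite setDE setICA setICr setI0.
Qed.

Lemma borel_null_setU (E F : set X) : borel E -> borel F ->
  mu E = 0%E -> mu F = 0%E -> mu (E `|` F) = 0%E.
Proof.
move=> bE bF muE muF; have bFE := borelD bE bF.
have -> : E `|` F = E `|` (F `\` E) by rewrite setUDr setDv setD0.
rewrite measureU_disjoint ?muE ?add0e //; last first.
  by rewrite setDE setICA setICr setI0.
apply/le_anti; rewrite mu_ge0 // andbT -muF.
by apply: measure_le => // x [].
Qed.

Definition conull_lconstant (T : Type) (f : X -> T) : Prop :=
  exists U : set X, [/\ open U, mu (~` U) = 0%E & lconstant_on U f].

Lemma conull_lconstant_closed : pointwise_closed (fun T f => conull_lconstant f).
Proof.
split=> [T1 T2 F u [U [oU muU cu]]|T1 T2 u v [U [oU muU cu]] [V [oV muV cv]]].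
  by exists U; split => //; exact: lconstant_on_comp.
exists (U `&` V); split; [exact: openI| |exact: lconstant_on_pair].
have borelC_open (W : set X) : open W -> borel (~` W).
  by move=> oW; apply: borelC; exact: sub_sigma_algebra.
by rewrite setCI; apply: borel_null_setU => //; exact: borelC_open.
Qed.

Definition typeI_class : fun_class X :=
  class_meet (fun T f => lfinite_valued f) (fun T f => conull_lconstant f).

Lemma typeI_class_closed : pointwise_closed typeI_class.
Proof.
exact: pointwise_closed_meet (lfinite_valued_closed X) conull_lconstant_closed.
Qed.

End NullSets.

Section SemialgebraicSets.
Variables (R : realType) (I : Type).

Lemma semialgebraic0 : semialgebraic (set0 : set (I -> R)).
Proof.
have -> : set0 = [set x : I -> R | 0 < (fun _ => 0 : R) x].
  by apply/seteqP; split => x //=; rewrite ltxx.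
exact/semialg_basic/polyfun_const.
Qed.

Lemma semialgebraicI (S T : set (I -> R)) : semialgebraic S -> semialgebraic T ->
  semialgebraic (S `&` T).
Proof.
move=> sS sT; rewrite -[S `&` T]setCK setCI.
by apply: semialg_compl; apply: semialg_union; exact: semialg_compl.
Qed.

End SemialgebraicSets.

Section TypeIIClass.
Variables (R : realType) (G : topologicalType) (p n : nat) (iota : G -> 'M[R]_n).
Local Notation X := (gpow G p).
Local Notation coords := ('I_p * 'I_n * 'I_n -> R).

Definition semialgebraic_levels (T : Type) (f : X -> T) : Prop :=
  forall (a : T) (x : X), exists2 V, nbhs x V &
    exists2 S : set coords, semialgebraic S &
      V `&` f @^-1` [set a] = V `&` [set y | S (gcoords iota y)].

Lemma semialgebraic_levels_pair (T1 T2 : Type) (u : X -> T1) (v : X -> T2) :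
  semialgebraic_levels u -> semialgebraic_levels v ->
  semialgebraic_levels (fun x => (u x, v x)).
Proof.
move=> lu lv [b c] x.
have [U xU [S sS eS]] := lu b x; have [V xV [S' sS' eS']] := lv c x.
exists (U `&` V); first exact: filterI.
exists (S `&` S'); first exact: semialgebraicI.
apply/seteqP; split=> y [[Uy Vy]] /=.
- case=> ub vc.
  have : (U `&` u @^-1` [set b]) y by [].
  have : (V `&` v @^-1` [set c]) y by [].
  by rewrite eS eS' => -[_ S'y] [_ Sy].
- case=> Sy S'y.
  have : (U `&` [set y | S (gcoords iota y)]) y by [].
  have : (V `&` [set y | S' (gcoords iota y)]) y by [].
  by rewrite -eS -eS' => -[_ ->] [_ ->].
Qed.

Lemma semialgebraic_levels_comp (T1 T2 : choiceType) (F : T1 -> T2) (u : X -> T1) :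
  lfinite_valued u -> semialgebraic_levels u -> semialgebraic_levels (F \o u).
Proof.
move=> fu lu a x; have [U xU /finite_seqP[s us]] := fu x.
have /choice[VS hVS] : forall b, exists VS : set X * set coords,
    [/\ nbhs x VS.1, semialgebraic VS.2 &
        VS.1 `&` u @^-1` [set b] = VS.1 `&` [set y | VS.2 (gcoords iota y)]].
  by move=> b; have [V xV [S sS eS]] := lu b x; exists (V, S).
have us_mem y : U y -> u y \in s.
  by move=> Uy; have : [set` s] (u y) by rewrite -us; exists y.
exists (U `&` \bigcap_(b in [set` s]) (VS b).1).
  apply: filterI => //; rewrite bigcap_seq.
  by apply: big_ind => [|V W|b _]; [exact: filterT|exact: filterI|case: (hVS b)].
exists (\bigcup_(b in [set b | (b \in s) && (F b == a)]) (VS b).2).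
  rewrite bigcup_seq_cond.
  by apply: big_ind => [|S S'|b _]; [exact: semialgebraic0|exact: semialg_union|case: (hVS b)].
apply/seteqP; split=> y [[Uy Vy]] /= => [Fa|[b /andP[bs /eqP Fba] Sb]]; split => //.
- exists (u y); first by apply/andP; split; [exact: us_mem | exact/eqP].
  have [_ _ e] := hVS (u y).
  have : ((VS (u y)).1 `&` u @^-1` [set u y]) y by split => //; exact/Vy/us_mem.
  by rewrite e => -[].
- have [_ _ e] := hVS b.
  have : ((VS b).1 `&` [set y | (VS b).2 (gcoords iota y)]) y by split => //; exact: Vy.
  by rewrite -e => -[_ /= ->].
Qed.

End TypeIIClass.

Definition typeII_class (R : realType) (G : topologicalType) (p n : nat)
  (iota : G -> 'M[R]_n) : fun_class (gpow G p) :=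
  class_meet (fun T f => lfinite_valued f) (fun T f => semialgebraic_levels iota f).

Lemma typeII_class_closed (R : realType) (G : topologicalType) (p n : nat)
  (iota : G -> 'M[R]_n) : pointwise_closed (@typeII_class R G p n iota).
Proof.
have [fcomp fpair] := lfinite_valued_closed (gpow G p).
split=> [T1 T2 F u [fu lu]|T1 T2 u v [fu lu] [fv lv]]; split.
- exact: fcomp.
- exact: semialgebraic_levels_comp.
- exact: fpair.
- exact: semialgebraic_levels_pair.
Qed.

Lemma exists_natSinv_lt (R : archiRealFieldType) (e : R) :
  0 < e -> exists N : nat, N.+1%:R^-1 < e.
Proof.
move=> e0; have [N _ hN] := near_infty_natSinv_lt (PosNum e0).
by exists N; exact: (hN N (leqnn N)).
Qed.

Section CompatibleMetric.
Variables (R : realType) (T : topologicalType) (d : T -> T -> R).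
Hypothesis dT : compatible_metric d.

Lemma cmetric_ge0 x y : 0 <= d x y. Proof. by case: dT. Qed.
Lemma cmetric_sym x y : d x y = d y x. Proof. by case: dT. Qed.
Lemma cmetric_triangle x y z : d x z <= d x y + d y z. Proof. by case: dT. Qed.
Lemma cmetric_xx x : d x x = 0. Proof. by case: dT => _ dxy0 _ _ _; apply/dxy0. Qed.

Lemma nbhs_cmetric_ball x e : 0 < e -> nbhs x [set y | d x y < e].
Proof. by case: dT => _ _ _ _ dnbhs e0; apply/dnbhs; exists e. Qed.

Lemma nbhs_cmetric_ballP x U :
  nbhs x U -> exists2 e : R, 0 < e & [set y | d x y < e] `<=` U.
Proof. by case: dT => _ _ _ _ dnbhs /dnbhs. Qed.

Lemma cmetric_cvg (u : nat -> T) l :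
  (forall e : R, 0 < e -> exists N, forall k, (N <= k)%N -> d (u k) l < e) ->
  u @ \oo --> l.
Proof.
move=> ul U /nbhs_cmetric_ballP[e e0 eU]; have [N hN] := ul e e0.
by exists N => // k /= /hN; rewrite cmetric_sym => /eU.
Qed.

Lemma cmetric_hausdorff : hausdorff_space T.
Proof.
move=> x y clxy; have [_ dxy0 _ _ _] := dT; apply/dxy0/le_anti.
rewrite cmetric_ge0 andbT leNgt; apply/negP => dxy.
have e0 : 0 < d x y / 2 by rewrite divr_gt0.
have [z [/= xz yz]] := clxy _ _ (nbhs_cmetric_ball x e0) (nbhs_cmetric_ball y e0).
by have := cmetric_triangle x z y; rewrite (cmetric_sym z y); lra.
Qed.

Hypothesis dcomplete : complete_metric d.

Lemma nested_balls_limit (y : nat -> T) (r : nat -> R) :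
  (forall j, 0 < r j) -> (forall j, d (y j) (y j.+1) + r j.+1 <= r j) ->
  (forall e, 0 < e -> exists j, r j < e) ->
  exists l, forall j, d (y j) l <= r j.
Proof.
move=> r_gt0 nested r_small.
have tele t j : d (y j) (y (j + t)%N) + r (j + t)%N <= r j.
  elim: t j => [|t IH] j; first by rewrite addn0 cmetric_xx add0r.
  rewrite addnS; have := nested (j + t)%N; have := IH j.
  by have := cmetric_triangle (y j) (y (j + t)%N) (y (j + t).+1); lra.
have near_ball j k : (j <= k)%N -> d (y j) (y k) <= r j - r k.
  by move=> /subnKC <-; have := tele (k - j)%N j; lra.
have [l yl] : exists l, forall e, 0 < e ->
    exists N, forall k, (N <= k)%N -> d (y k) l < e.
  apply: dcomplete => e e0; have [j rj] := r_small (e / 2) (divr_gt0 e0 (ltr0n R 2)).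
  exists j => m k jm jk; have := near_ball j m jm; have := near_ball j k jk.
  have := cmetric_triangle (y m) (y j) (y k); rewrite (cmetric_sym (y m) (y j)).
  by have := r_gt0 m; have := r_gt0 k; lra.
exists l => j; apply/ler_addgt0Pr => e e0; have [N hN] := yl e e0.
have := hN (maxn N j) (leq_maxl _ _); have := near_ball j _ (leq_maxr N j).
have := cmetric_triangle (y j) (y (maxn N j)) l.
by have := r_gt0 (maxn N j); lra.
Qed.

End CompatibleMetric.

Section TopologicalZmod.
Variable A : topologicalZmodType.

Definition zmod_cauchy (a : nat -> A) : Prop :=
  forall V, nbhs (0 : A) V ->
    exists N, forall m k, (N <= m)%N -> (N <= k)%N -> V (a m - a k).

Lemma nbhs_addr (x c : A) (S : set A) :
  nbhs (x + c) S -> nbhs x [set y | S (y + c)].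
Proof.
move=> /(@add_continuous A (x, c)) [[P Q] /= [Px Qc] PQ].
by apply: filterS Px => y Py; apply: (PQ (y, c)); split => //; exact: nbhs_singleton.
Qed.

Lemma nbhs0_half (V : set A) : nbhs (0 : A) V -> exists U : set A,
  [/\ nbhs (0 : A) U, forall u, U u -> U (- u) & forall u v, U u -> U v -> V (u + v)].
Proof.
move=> V0; have : nbhs ((0 : A) + 0) V by rewrite addr0.
move=> /(@add_continuous A (0, 0)) [[P Q] /= [P0 Q0] PQ].
have NPQ : nbhs (0 : A) [set u | (P `&` Q) (- u)].
  by apply: (@opp_continuous A 0); rewrite oppr0; exact: filterI.
exists [set u | (P `&` Q) u /\ (P `&` Q) (- u)]; split.
- exact: filterI (filterI P0 Q0) NPQ.
- by move=> u [PQu PQNu]; split => //; rewrite opprK.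
- by move=> u v [[Pu _] _] [[_ Qv] _]; exact: (PQ (u, v)).
Qed.

End TopologicalZmod.

Section CompleteMetricZmod.
Variables (R : realType) (A : topologicalZmodType) (d : A -> A -> R).
Hypothesis dA : compatible_metric d.

Lemma metric_addr_uniform (w : A) (e : R) : 0 < e -> exists Q V,
  [/\ nbhs w Q, nbhs (0 : A) V & forall w' v, Q w' -> V v -> d w' (w' + v) < e].
Proof.
move=> e0; have e2 : 0 < e / 2 by rewrite divr_gt0.
have : nbhs (w + 0) [set z | d w z < e / 2] by rewrite addr0; exact: nbhs_cmetric_ball.
move=> /(@add_continuous A (w, 0)) [[Q V] /= [wQ V0] QV].
exists (Q `&` [set z | d w z < e / 2]), V; split => //.
  exact: filterI wQ (nbhs_cmetric_ball dA w e2).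
move=> w' v [Qw' /= ww'] Vv; have /= ww'v := QV (w', v) (conj Qw' Vv).
by have := cmetric_triangle dA w' w (w' + v); rewrite (cmetric_sym dA w' w); lra.
Qed.

Hypothesis dcomplete : complete_metric d.

Section Translates.
Variable a : nat -> A.
Hypothesis a_cauchy : zmod_cauchy a.

Definition translate_osc_lt (y : A) (e : R) : Prop :=
  exists N, forall m k, (N <= m)%N -> (N <= k)%N -> d (y + a m) (y + a k) < e.

Lemma translate_osc_step (y0 : A) (r0 e : R) : 0 < r0 -> 0 < e ->
  exists y1 r1, [/\ 0 < r1, r1 <= e, d y0 y1 + r1 <= r0 &
    forall y, d y1 y <= r1 -> translate_osc_lt y e].
Proof.
move=> r0_gt0 e_gt0; have r02 : 0 < r0 / 2 by rewrite divr_gt0.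
have e2 : 0 < e / 2 by rewrite divr_gt0.
have U0 : nbhs (0 : A) [set u | d y0 (y0 + u) < r0 / 2].
  apply: filterS (@nbhs_addr _ 0 y0 [set z | d y0 z < r0 / 2] _) => [u /=|].
    by rewrite addrC.
  by rewrite add0r; exact: nbhs_cmetric_ball.
have [N0 hN0] := a_cauchy U0.
have [Q [V [nQ V0 hQV]]] := metric_addr_uniform (y0 + a N0) e2.
have [N1 hN1] := a_cauchy V0.
pose N := maxn N0 N1; pose y1 := y0 + (a N0 - a N).
have nQ' : nbhs y1 [set y | Q (y + a N)].
  by apply: nbhs_addr; rewrite /y1 -addrA subrK.
have [rho rho_gt0 hrho] := nbhs_cmetric_ballP dA nQ'.
have dy01 : d y0 y1 < r0 / 2 by apply: hN0 => //; rewrite leq_maxl.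
pose r1 := Num.min (rho / 2) (Num.min e (r0 / 2)).
have r1_rho : r1 <= rho / 2 by rewrite ge_min lexx.
have r1_r0 : r1 <= r0 / 2 by rewrite !ge_min lexx !orbT.
exists y1, r1; split.
- by rewrite !lt_min divr_gt0 //= e_gt0 r02.
- by rewrite !ge_min lexx orbT.
- lra.
move=> y dy1y; have Qy : Q (y + a N) by apply: hrho => /=; lra.
have QN j : (N <= j)%N -> d (y + a N) (y + a j) < e / 2.
  move=> Nj; have -> : y + a j = (y + a N) + (a j - a N).
    by rewrite -addrA [a N + _]addrC subrK.
  by apply: hQV => //; apply: hN1; [exact: leq_trans (leq_maxr _ _) Nj | exact: leq_maxr].
exists N => m k Nm Nk; have := QN m Nm; have := QN k Nk.
have := cmetric_triangle dA (y + a m) (y + a N) (y + a k).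
by rewrite (cmetric_sym dA (y + a m) (y + a N)); lra.
Qed.

Lemma translate_osc_all : exists y, forall j, translate_osc_lt y j.+1%:R^-1.
Proof.
have /choice[next hnext] : forall jyr : nat * (A * R), exists yr : A * R,
    0 < jyr.2.2 -> [/\ 0 < yr.2, yr.2 <= jyr.1.+1%:R^-1, d jyr.2.1 yr.1 + yr.2 <= jyr.2.2 &
      forall y, d yr.1 y <= yr.2 -> translate_osc_lt y jyr.1.+1%:R^-1].
  move=> [j [y0 r0]]; have [r0_gt0|_] := ltP 0 r0; last by exists (y0, r0).
  have j_gt0 : 0 < j.+1%:R^-1 :> R by rewrite invr_gt0 ltr0n.
  have [y1 [r1 step]] := translate_osc_step y0 r0_gt0 j_gt0.
  by exists (y1, r1).
pose yr := fix yr j := if j is j'.+1 then next (j', yr j') else (0 : A, 1 : R).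
have r_gt0 j : 0 < (yr j).2 by elim: j => [|j IH] //=; case: (hnext (j, yr j) IH).
have step j := hnext (j, yr j) (r_gt0 j).
have [l yl] : exists l, forall j, d (yr j).1 l <= (yr j).2.
  apply: (nested_balls_limit dA dcomplete r_gt0) => [j|e e0].
    by case: (step j).
  have [j je] := exists_natSinv_lt e0; exists j.+1.
  by case: (step j) => _ rj _ _; apply: le_lt_trans je.
by exists l => j; case: (step j) => _ _ _; apply; exact: (yl j.+1).
Qed.

End Translates.

(* The metric [d] need not be translation invariant, so a Cauchy sequence for
   the group uniformity need not be [d]-Cauchy; a nested-ball argument finds a
   translate of it which is. *)
Lemma zmod_cauchy_cvg (a : nat -> A) : zmod_cauchy a -> exists l : A, a n @[n --> \oo] --> l.
Proof.
move=> a_cauchy; have [y y_osc] := translate_osc_all a_cauchy.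
have [z yz] : exists z, forall e, 0 < e ->
    exists N, forall k, (N <= k)%N -> d (y + a k) z < e.
  apply: dcomplete => e e0; have [j je] := exists_natSinv_lt e0.
  have [N hN] := y_osc j; exists N => m k Nm Nk.
  by apply: lt_trans je; exact: hN.
exists (z - y) => U /nbhs_addr zU.
have [N _ hN] := cmetric_cvg dA yz zU.
by exists N => // k /hN /=; rewrite addrC addKr.
Qed.

End CompleteMetricZmod.

Section NbhsChain.
Variable A : topologicalZmodType.

Definition nbhs0_chain (W : nat -> set A) : Prop :=
  [/\ forall j, nbhs (0 : A) (W j), forall j w, W j w -> W j (- w),
      forall j u v, W j.+1 u -> W j.+1 v -> W j (u + v) &
      forall V, nbhs (0 : A) V -> exists j, W j `<=` V].

Lemma exists_nbhs0_chain (R : realType) (d : A -> A -> R) :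
  compatible_metric d -> exists W, nbhs0_chain W.
Proof.
move=> dA.
have /choice[half hhalf] : forall V : set A, exists U : set A, nbhs (0 : A) V ->
    [/\ nbhs (0 : A) U, forall u, U u -> U (- u) & forall u v, U u -> U v -> V (u + v)].
  move=> V; have [/nbhs0_half[U hU]|nV] := pselect (nbhs (0 : A) V).
    by exists U.
  by exists set0 => /nV.
pose ball0 j := [set y | d 0 y < j.+1%:R^-1].
have ball0_nbhs j : nbhs (0 : A) (ball0 j).
  by apply: (nbhs_cmetric_ball dA); rewrite invr_gt0 ltr0n.
pose W := fix W j := if j is j'.+1 then half (W j' `&` ball0 j') else setT.
have W_nbhs j : nbhs (0 : A) (W j).
  elim: j => [|j IH]; first exact: filterT.
  by case: (hhalf _ (filterI IH (ball0_nbhs j))).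
have W_half j : [/\ nbhs (0 : A) (W j.+1), forall u, W j.+1 u -> W j.+1 (- u) &
    forall u v, W j.+1 u -> W j.+1 v -> (W j `&` ball0 j) (u + v)].
  by apply: hhalf; exact: filterI.
exists W; split => //.
- by move=> [|j] w //; case: (W_half j) => _ + _; apply.
- by move=> j u v Wu Wv; case: (W_half j) => _ _ /(_ u v Wu Wv) [].
- move=> V /(nbhs_cmetric_ballP dA)[e e0 eV]; have [N Ne] := exists_natSinv_lt e0.
  exists N.+1 => w Ww; apply: eV => /=.
  case: (W_half N) => _ _ /(_ w 0 Ww (nbhs_singleton (W_nbhs N.+1))) [_].
  by rewrite addr0 /= => dw; apply: lt_trans Ne.
Qed.

Section Chains.
Variable W : nat -> set A.
Hypothesis Wchain : nbhs0_chain W.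

Lemma chain0 j : W j 0.
Proof. by case: Wchain => W0 _ _ _; exact: nbhs_singleton. Qed.

Lemma chain_le i j : (i <= j)%N -> W j `<=` W i.
Proof.
case: Wchain => _ _ WD _ /subnK <-; elim: (j - i)%N => [|t IH] w //=.
by rewrite addSn => Ww; apply: IH; rewrite -[w]addr0; apply: WD => //; exact: chain0.
Qed.

Variables (h : nat -> A) (j0 : nat).
Hypothesis h_steps : forall k, (j0 <= k)%N -> W k.+1 (h k.+1 - h k).

Lemma chain_tail k m : (j0 <= k)%N -> (k < m)%N -> W k (h m - h k).
Proof.
case: Wchain => _ _ WD _ j0k km; rewrite -(subnKC km).
move: (m - k.+1)%N => t; elim: t k j0k {km} => [|t IH] k j0k.
  by rewrite addn0; apply: chain_le (leqnSn k) _ _; exact: h_steps.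
have -> : h (k.+1 + t.+1) - h k = (h (k.+2 + t) - h k.+1) + (h k.+1 - h k).
  by rewrite addnS addSn addrA subrK.
by apply: WD; [apply: IH; exact: leqW | exact: h_steps].
Qed.

Lemma chain_zmod_cauchy : zmod_cauchy h.
Proof.
case: Wchain => _ WN _ Wsub V /Wsub[i WiV].
exists (maxn j0 i) => m k; rewrite !geq_max => /andP[j0m im] /andP[j0k ik].
apply: WiV; have [km|mk|->] := ltngtP k m.
- exact: chain_le ik _ (chain_tail j0k km).
- by rewrite -opprB; apply: WN; exact: chain_le im _ (chain_tail j0m mk).
- by rewrite subrr; exact: chain0.
Qed.

Lemma chain_cvg_rate l : h n @[n --> \oo] --> l ->
  forall k, (j0 <= k)%N -> W k (h k.+1 - l).
Proof.
case: Wchain => W0 WN WD _ hl k j0k.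
have : nbhs (l + - l) (W k.+1) by rewrite subrr.
move=> /nbhs_addr /hl[M _ hM].
have [m Mm km] : exists2 m, (M <= m)%N & (k.+1 < m)%N.
  by exists (maxn M k.+2); rewrite ?leq_maxl ?leq_maxr.
have -> : h k.+1 - l = (h m - l) + - (h m - h k.+1).
  by rewrite opprB [RHS]addrC addrA subrK.
apply: WD; first exact: hM.
by apply: WN; apply: chain_tail => //; exact: leqW.
Qed.

End Chains.
End NbhsChain.

Section QuotientLift.
Variables (A C : topologicalZmodType) (q : A -> C).
Hypothesis qA : quotient_map q.

Lemma quotient_mapB a b : q (a - b) = q a - q b.
Proof. by case: qA. Qed.

Lemma quotient_map0 : q 0 = 0.
Proof. by rewrite -(subrr (0 : A)) quotient_mapB subrr. Qed.

Lemma quotient_mapD a b : q (a + b) = q a + q b.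
Proof.
have qN c : q (- c) = - q c by rewrite -sub0r quotient_mapB quotient_map0 sub0r.
by rewrite -{1}[b]opprK quotient_mapB qN opprK.
Qed.

Lemma quotient_diff_nbhs0 (V : set A) : nbhs (0 : A) V ->
  exists2 Z : set C, nbhs (0 : C) Z &
    forall z z', Z z -> Z z' -> exists2 a, V a & q a = z - z'.
Proof.
have [_ _ _ q_open] := qA.
rewrite nbhsE; case=> U [U_open U0] UV.
have : nbhs ((0 : C) - 0) (q @` U).
  apply: open_nbhs_nbhs; split; first exact: q_open.
  by exists 0 => //; rewrite quotient_map0 subrr.
move=> /(@sub_continuous C (0, 0)) [[P Q] /= [P0 Q0] PQ].
exists (P `&` Q); first exact: filterI.
move=> z z' [Pz _] [_ Qz']; have [a Ua qa] := PQ (z, z') (conj Pz Qz').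
by exists a => //; exact: UV.
Qed.

Lemma quotient_section (V : set A) : exists s : C -> A,
  (forall c, q (s c) = c) /\ forall c, (exists2 a, V a & q a = c) -> V (s c).
Proof.
have [_ _ q_surj _] := qA.
have /choice[s hs] : forall c, exists a, q a = c /\ ((exists2 b, V b & q b = c) -> V a).
  move=> c; have [[b Vb qb]|noV] := pselect (exists2 b, V b & q b = c).
    by exists b.
  by have [a qa] := q_surj c; exists a; split => // /noV.
by exists s; split => c; case: (hs c).
Qed.

Variable X : topologicalType.

Lemma lift_increments (P : fun_class X) : pointwise_closed P ->
  forall (g : nat -> X -> C) (s : nat -> C -> A),
  (forall k, P C (g k)) -> (forall k c, q (s k c) = c) ->
  exists h : nat -> X -> A, [/\ forall k, P A (h k), forall k x, q (h k x) = g k x &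
    forall k x, h k.+1 x - h k x = s k (g k.+1 x - g k x)].
Proof.
move=> Pclosed g s Pg qs; have [Pcomp _] := Pclosed.
pose h := fix h k := if k is k'.+1 then fun x => h k' x + s k' (g k x - g k' x)
  else s 0%N \o g 0%N.
exists h; split.
- elim=> [|k IH] /=; first exact: Pcomp.
  apply: (pointwise_closed_map2 Pclosed (fun a b => a + b)) IH _.
  exact: (pointwise_closed_map2 Pclosed (fun c c' => s k (c' - c))).
- by elim=> [|k IH] x /=; rewrite ?quotient_mapD ?IH qs // addrC subrK.
- by move=> k x /=; rewrite addrC addKr.
Qed.

End QuotientLift.

Definition compact_exhaustion (X : topologicalType) (K : nat -> set X) : Prop :=
  [/\ forall j, compact (K j), forall i j, (i <= j)%N -> K i `<=` K j &
      forall Y, compact Y -> exists j, Y `<=` K j].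

Lemma dominating_sequence (N : nat -> nat) : exists n : nat -> nat,
  [/\ forall k, (n k <= n k.+1)%N, forall k, (N k <= n k)%N & forall k, (k <= n k)%N].
Proof.
exists (fun k => k + \sum_(i < k.+1) N i)%N; split => k.
- by rewrite (big_ord_recr k.+1) /= leq_add ?leq_addr.
- by rewrite big_ord_recr /= addnA leq_addl.
- exact: leq_addr.
Qed.

Lemma locally_uniform_limit_pointwise (X : topologicalType) (A : topologicalZmodType)
  (g : nat -> X -> A) (f : X -> A) :
  locally_uniform_limit g f -> forall x, g k x @[k --> \oo] --> f x.
Proof.
move=> gf x U; rewrite -{1}[f x]add0r => /nbhs_addr U0.
suff : \forall k \near \oo, U (g k x) by [].
apply: filterS (gf _ (@compact_set1 X x) _ U0) => k /(_ x erefl) /=.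
by rewrite subrK.
Qed.

Section LiftLimit.
Variables (X : topologicalType) (A : topologicalZmodType).
Variables (K : nat -> set X) (W : nat -> set A).
Hypotheses (Kexh : compact_exhaustion K) (Wchain : nbhs0_chain W).
Hypothesis Acomplete :
  forall a : nat -> A, zmod_cauchy a -> exists l : A, a n @[n --> \oo] --> l.

Lemma chain_limit (h : nat -> X -> A) :
  (forall j x, K j x -> forall k, (j <= k)%N -> W k.+1 (h k.+1 x - h k x)) ->
  exists fh : X -> A,
    (forall x, h k x @[k --> \oo] --> fh x) /\ locally_uniform_limit h fh.
Proof.
move=> h_steps; have [_ _ Kcover] := Kexh; have [_ _ _ Wsub] := Wchain.
have /choice[fh hfh] : forall x, exists l : A, h k x @[k --> \oo] --> l.
  move=> x; have [j /(_ x erefl) Kjx] := Kcover _ (@compact_set1 X x).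
  exact/Acomplete/(chain_zmod_cauchy Wchain (h_steps j x Kjx)).
exists fh; split => // Y /Kcover[J YJ] V /Wsub[i WiV].
exists (maxn J i).+1 => // -[|k] /=; first by rewrite ltn0.
rewrite ltnS geq_max => /andP[Jk ik] x Yx.
apply/WiV/(chain_le Wchain ik).
exact: (chain_cvg_rate Wchain (h_steps J x (YJ x Yx)) (hfh x)).
Qed.

End LiftLimit.

Section QuotientLiftLimit.
Variables (X : topologicalType) (A C : topologicalZmodType) (q : A -> C).
Variables (K : nat -> set X) (W : nat -> set A).
Hypotheses (qA : quotient_map q) (C_hausdorff : hausdorff_space C).
Hypotheses (Kexh : compact_exhaustion K) (Wchain : nbhs0_chain W).
Hypothesis Acomplete :
  forall a : nat -> A, zmod_cauchy a -> exists l : A, a n @[n --> \oo] --> l.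

Theorem quotient_lift (P : fun_class X) : pointwise_closed P ->
  forall (g : nat -> X -> C) (f : X -> C),
  (forall k, P C (g k)) -> locally_uniform_limit g f ->
  exists fh : X -> A, (forall x, q (fh x) = f x) /\
    exists h : nat -> X -> A, (forall k, P A (h k)) /\ locally_uniform_limit h fh.
Proof.
move=> Pclosed g f Pg gf; have [Kcompact Kmono _] := Kexh.
have [W0 _ _ _] := Wchain; have [_ q_cont _ _] := qA.
have /choice[Z hZ] : forall j, exists Z : set C, nbhs (0 : C) Z /\
    forall z z', Z z -> Z z' -> exists2 a, W j.+1 a & q a = z - z'.
  by move=> j; have [Z Z0 hZ] := quotient_diff_nbhs0 qA (W0 j.+1); exists Z.
have /choice[s hs] : forall j, exists s : C -> A, (forall c, q (s c) = c) /\
    forall c, (exists2 a, W j.+1 a & q a = c) -> W j.+1 (s c).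
  by move=> j; exact: quotient_section.
have /choice[N hN] : forall j, exists N,
    forall m, (N <= m)%N -> forall x, K j x -> Z j (g m x - f x).
  move=> j; have [N _ hN] := gf _ (Kcompact j) _ (hZ j).1.
  by exists N => m /hN.
have [n [n_mono n_N n_ge]] := dominating_sequence N.
have [h [Ph qh h_step]] :=
  lift_increments qA Pclosed (fun k => Pg (n k)) (fun k => (hs k).1).
have [fh [hfh lul_h]] : exists fh : X -> A,
    (forall x, h k x @[k --> \oo] --> fh x) /\ locally_uniform_limit h fh.
  apply: (chain_limit Kexh Wchain Acomplete) => j x Kjx k jk.
  rewrite h_step; apply: (hs k).2; have Kkx := Kmono _ _ jk _ Kjx.
  have -> : g (n k.+1) x - g (n k) x = (g (n k.+1) x - f x) - (g (n k) x - f x).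
    by rewrite opprB addrA subrK.
  apply: (hZ k).2; last exact: hN k _ (n_N k) _ Kkx.
  exact: hN k _ (leq_trans (n_N k) (n_mono k)) _ Kkx.
exists fh; split; last by exists h.
move=> x.
have qh_fh : q (h k x) @[k --> \oo] --> q (fh x) := cvg_comp _ _ (hfh x) (q_cont (fh x)).
have qh_f : q (h k x) @[k --> \oo] --> f x.
  move=> U /(locally_uniform_limit_pointwise gf)[M _ MU].
  by exists M => // k /= Mk; rewrite qh; apply: MU; exact: leq_trans Mk (n_ge k).
exact: (cvg_unique C_hausdorff qh_fh qh_f).
Qed.

End QuotientLiftLimit.

Lemma locally_compact_exhaustion (G : topologicalType) :
  @second_countable G -> locally_compact [set: G] ->
  exists K : nat -> set G, compact_exhaustion K.
Proof.
move=> [B B_countable [B_open B_basis]] lcG.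
pose BC := [set b : set G | b = set0 \/ B b /\ compact (closure b)].
have [e BCe] : exists e : nat -> set G, BC = range e.
  have : countable BC.
    have BCsub : BC `<=` B `|` [set set0] by move=> b [->|[Bb _]]; [right|left].
    apply: sub_countable (subset_card_le BCsub) _.
    by rewrite -bigcup2E; apply: bigcup_countable => // -[|[|i]] _ //=; exact: countable1.
  case/pfcard_geP => [BC0|/surjfunPex[e ->]]; last by exists e.
  have BC_set0 : BC set0 by left.
  by rewrite BC0 in BC_set0.
have e_BC i : BC (e i) by rewrite BCe; exists i.
have e_open i : open (e i) by case: (e_BC i) => [->|[/B_open]//]; exact: open0.
have e_cover x : exists i, e i x.
  have [U xU [U_compact U_closed]] := lcG x I; rewrite withinET in xU.
  have [b [Bb bx] bU] := B_basis x U xU.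
  have : BC b.
    right; split => //; apply: (subclosed_compact _ U_compact) => //.
      exact: closed_closure.
    by rewrite (closure_id U).1 //; exact: closureS.
  by rewrite BCe => -[i _ eib]; exists i; rewrite eib.
exists (fun j => \bigcup_(i < j) closure (e i)); split.
- move=> j; rewrite bigcup_mkord; apply: bigsetU_compact => i _.
  by case: (e_BC i) => [->|[]//]; rewrite closure0; exact: compact0.
- by move=> i j ij x [k /= ki ekx]; exists k => //=; exact: leq_trans ij.
- move=> Y /compact_near_coveringP Y_cover.
  have : \forall j \near \oo, Y `<=` \bigcup_(i < j) closure (e i).
    apply: (Y_cover nat \oo (fun j x => (\bigcup_(i < j) closure (e i)) x)) => x _.
    have [i eix] := e_cover x.
    exists (e i, [set j | (i < j)%N]); first split => /=.
    + by apply: open_nbhs_nbhs; split => //; exact: e_open.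
    + by exists i.+1.
    + by move=> [x' j] /= [eix' ij]; exists i => //; exact: subset_closure.
  by case=> N _ YN; exists N; exact: (YN N (leqnn N)).
Qed.

Lemma compact_exhaustion_gpow (G : topologicalType) (p : nat) (K : nat -> set G) :
  compact_exhaustion K ->
  compact_exhaustion (fun j => [set x : gpow G p | forall i, K j (x i)]).
Proof.
move=> [K_compact K_mono K_cover]; split.
- by move=> j; exact: (@tychonoff 'I_p (fun _ => G) (fun _ => K j) (fun _ => K_compact j)).
- by move=> i j ij x Kx k; exact: K_mono ij _ (Kx k).
- move=> Y Y_compact.
  have /choice[J hJ] : forall k : 'I_p, exists j, (fun y : gpow G p => y k) @` Y `<=` K j.
    move=> k; apply: K_cover; apply: continuous_compact => //.
    apply: continuous_subspaceT => y.
    exact: (@proj_continuous 'I_p (fun _ => G) k y).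
  exists (\max_(k < p) J k)%N => y Yy k.
  by apply: (K_mono _ _ (leq_bigmax k)); apply: hJ; exists y.
Qed.

Theorem proposition3p4 (R : realType) (G : topologicalType)
  (mul : G -> G -> G) (inv : G -> G) (one : G) (p : nat)
  (A C : topologicalZmodType) (B : set A) (q : A -> C)
  (mu : set (gpow G p) -> \bar R) :
  lcsc_group mul inv one -> (1 <= p)%N ->
  polish R A -> polish R C ->
  closed B -> B = q @^-1` [set 0] -> quotient_map q ->
  haar_measure (@pmul G p mul) mu ->
  (forall f : gpow G p -> C,
     almost_regular (typeI mu) f (@pone G p one) ->
     exists fh : gpow G p -> A,
       (forall x, q (fh x) = f x) /\
       almost_regular (typeI mu) fh (@pone G p one))
  /\
  (forall (n : nat) (iota : G -> 'M[R]_n),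
     algebraic_embedding mul iota ->
     forall f : gpow G p -> C,
       almost_regular (@typeII R G p n iota C) f (@pone G p one) ->
       exists fh : gpow G p -> A,
         (forall x, q (fh x) = f x) /\
         almost_regular (@typeII R G p n iota A) fh (@pone G p one)).
Proof.
move=> [_ _ lcG scG] _ [_ [dA [dA_metric dA_complete]]] [_ [dC [dC_metric _]]] _ _ qA
  [[mu0 mu_ge0] mu_sigma_additive _ _ _].
have [KG KG_exh] := locally_compact_exhaustion scG lcG.
have [W Wchain] := exists_nbhs0_chain dA_metric.
have lift := quotient_lift qA (cmetric_hausdorff dC_metric)
  (compact_exhaustion_gpow p KG_exh) Wchain (zmod_cauchy_cvg dA_metric dA_complete).
have regular_closed (P : fun_class (gpow G p)) : pointwise_closed P ->
    pointwise_closed (class_meet P (fun T f => constant_near (@pone G p one) f)).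
  by move=> Pclosed; exact: pointwise_closed_meet Pclosed (constant_near_closed _).
split=> [f [g [Pg gf]]|n iota _ f [g [Pg gf]]].
- have [fh [qfh [h [Ph hfh]]]] :=
    lift _ (regular_closed _ (typeI_class_closed mu0 mu_ge0 mu_sigma_additive)) g f Pg gf.
  by exists fh; split => //; exists h.
- have [fh [qfh [h [Ph hfh]]]] :=
    lift _ (regular_closed _ (typeII_class_closed p iota)) g f Pg gf.
  by exists fh; split => //; exists h.
Qed.
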